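(* Let $T>0$, $0<\eta<T$ and $0<\alpha<\frac{1}{\eta}$. If $y\in C([0,T],[0,\infty))$, then the unique solution $u$ of the problem \[ u''(t)+y(t)=0,\quad t\in(0,T),\qquad u'(0)=0,\quad u(T)=\alpha\int_0^{\eta}u(s)\,ds \] satisfies \[ \min_{t\in[0,T]}u(t)\ge \gamma\|u\|,\qquad\text{where } \gamma=\frac{\alpha\eta(T-\eta)}{T-\alpha\eta^2},\quad \|u\|=\max_{t\in[0,T]}|u(t)|. \] *)

From Stdlib Require Import Reals.
From Coquelicot Require Import Coquelicot.
Open Scope R_scope.

Definition cont_on_interval (f : R -> R) (a b : R) : Prop :=
  forall t, a <= t <= b ->
    filterlim f (within (fun x => a <= x <= b) (locally t)) (locally (f t)).

Definition right_deriv (f : R -> R) (x l : R) : Prop :=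
  filterlim (fun h => (f (x + h) - f x) / h) (at_right 0) (locally l).

(* The equation u'' = -y <= 0 makes u concave, and u'(0) = 0 then makes u nonincreasing,
   so min u = u T and ||u|| = u 0 once u 0 >= 0.  Concavity bounds u on [0, eta] from below
   by u eta, and bounds u eta by the chord through (0, u 0) and (T, u T); inserting this into
   the boundary condition u T = alpha * int_0^eta u gives
   (T - alpha eta^2) u T >= alpha eta (T - eta) u 0, i.e. u T >= gamma u 0. *)

From Stdlib Require Import Reals Lra.
From Coquelicot Require Import Coquelicot.
Open Scope R_scope.

(* Extending f constantly outside [a, b] turns continuity on [a, b] into continuity on R,
   which is what the Stdlib mean value theorem and Coquelicot's integrability criterion use. *)
Definition clamp (a b x : R) : R := Rmax a (Rmin b x).

Lemma clamp_id a b x : a <= x <= b -> clamp a b x = x.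
Proof. intros. unfold clamp, Rmax, Rmin. repeat destruct Rle_dec; lra. Qed.

Lemma clamp_in a b x : a <= b -> a <= clamp a b x <= b.
Proof. intros. unfold clamp, Rmax, Rmin. repeat destruct Rle_dec; lra. Qed.

Lemma clamp_dist a b x y : a <= b -> Rabs (clamp a b x - clamp a b y) <= Rabs (x - y).
Proof.
  intros. unfold clamp, Rmax, Rmin.
  repeat destruct Rle_dec; unfold Rabs; repeat destruct Rcase_abs; lra.
Qed.

Lemma continuity_clamp_ext (f : R -> R) a b :
  a <= b -> cont_on_interval f a b -> continuity (fun x => f (clamp a b x)).
Proof.
  intros hab hf x. apply continuity_pt_filterlim.
  apply filterlim_comp with
    (G := within (fun z => a <= z <= b) (locally (clamp a b x))).
  - intros P [eps HP]. exists eps. intros z Hz. apply HP.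
    + change (Rabs (clamp a b z - clamp a b x) < eps).
      eapply Rle_lt_trans; [apply clamp_dist; exact hab | exact Hz].
    + apply clamp_in. exact hab.
  - apply hf. apply clamp_in. exact hab.
Qed.

Lemma cont_on_subinterval (f : R -> R) a b c d :
  cont_on_interval f a b -> a <= c -> d <= b -> cont_on_interval f c d.
Proof.
  intros hf hac hdb t ht.
  eapply filterlim_filter_le_1; [| apply hf; lra].
  intros P [eps HP]. exists eps. intros z Hz Hcd. apply HP; [exact Hz | lra].
Qed.

Lemma cont_on_interval_ex_derive (f : R -> R) a b :
  (forall x, a <= x <= b -> ex_derive f x) -> cont_on_interval f a b.
Proof.
  intros hf t ht.
  apply (filterlim_filter_le_1 f (filter_le_within _)).
  exact (ex_derive_continuous f t (hf t ht)).
Qed.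

Lemma ex_RInt_cont_on_interval (f : R -> R) a b :
  a <= b -> cont_on_interval f a b -> ex_RInt f a b.
Proof.
  intros hab hf.
  apply ex_RInt_ext with (f := fun x => f (clamp a b x)).
  - intros x Hx. rewrite Rmin_left, Rmax_right in Hx by exact hab.
    rewrite clamp_id; lra.
  - apply (@ex_RInt_continuous R_CompleteNormedModule). intros z _.
    apply continuity_pt_filterlim. apply continuity_clamp_ext; assumption.
Qed.

Lemma MVT_open (f df : R -> R) a b : a < b ->
  (forall x, a < x < b -> is_derive f x (df x)) ->
  (forall x, a <= x <= b -> continuity_pt f x) ->
  exists c, a < c < b /\ f b - f a = df c * (b - a).
Proof.
  intros hab hd hc.
  assert (pr1 : forall c, a < c < b -> derivable_pt f c).
  { intros c Hc. exists (df c). apply is_derive_Reals, hd, Hc. }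
  assert (pr2 : forall c, a < c < b -> derivable_pt id c).
  { intros c _. apply derivable_pt_id. }
  destruct (MVT f id a b pr1 pr2 hab hc) as [c [Hc H]].
  { intros c _. apply derivable_continuous_pt, derivable_pt_id. }
  exists c. split; [exact Hc |].
  assert (E1 : derive_pt f c (pr1 c Hc) = df c).
  { apply derive_pt_eq_0, is_derive_Reals, hd, Hc. }
  assert (E2 : derive_pt id c (pr2 c Hc) = 1).
  { apply derive_pt_eq_0, derivable_pt_lim_id. }
  rewrite E1, E2 in H. unfold id in H. lra.
Qed.

Lemma MVT_interval (f df : R -> R) a b : a < b ->
  cont_on_interval f a b ->
  (forall x, a < x < b -> is_derive f x (df x)) ->
  exists c, a < c < b /\ f b - f a = df c * (b - a).
Proof.
  intros hab hf hd.
  destruct (MVT_open (fun x => f (clamp a b x)) df a b hab) as [c [Hc E]].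
  - intros x Hx. apply is_derive_ext_loc with f; [| exact (hd x Hx)].
    apply (locally_interval _ x a b); try (simpl; lra).
    intros z Hz1 Hz2. simpl in Hz1, Hz2. rewrite clamp_id; lra.
  - intros x _. apply continuity_clamp_ext; [lra | exact hf].
  - exists c. split; [exact Hc |].
    rewrite !clamp_id in E by lra. exact E.
Qed.

Lemma nonincreasing_of_deriv_nonpos (f df : R -> R) a b :
  cont_on_interval f a b ->
  (forall x, a < x < b -> is_derive f x (df x)) ->
  (forall x, a < x < b -> df x <= 0) ->
  forall p q, a <= p <= q -> q <= b -> f q <= f p.
Proof.
  intros hf hd hneg p q Hpq Hqb.
  destruct (Req_dec p q) as [<- | Hne]; [lra |].
  destruct (MVT_interval f df p q) as [c [Hc E]]; [lra | | |].
  - apply (cont_on_subinterval f a b _ _ hf); lra.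
  - intros x Hx. apply hd. lra.
  - assert (df c <= 0) by (apply hneg; lra). nra.
Qed.

Section NonincreasingDerivative.

Variables (f df : R -> R) (a b : R).
Hypothesis f_cont : cont_on_interval f a b.
Hypothesis f_deriv : forall x, a < x < b -> is_derive f x (df x).
Hypothesis df_nonincreasing : forall p q, a < p <= q -> q < b -> df q <= df p.

(* By the mean value theorem, (f (a + h) - f a) / h >= df x whenever a + h < x,
   hence so is its limit l as h -> 0+. *)
Lemma deriv_le_right_deriv l : right_deriv f a l -> forall x, a < x < b -> df x <= l.
Proof.
  intros hl x Hx. destruct (Rle_or_lt (df x) l) as [H | H]; [exact H | exfalso].
  assert (Hd : 0 < (df x - l) / 2) by lra.
  destruct (hl (ball l ((df x - l) / 2))) as [eps Heps].
  { exists (mkposreal _ Hd). auto. }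
  set (h := Rmin (eps / 2) ((x - a) / 2)).
  assert (Hh1 : h <= eps / 2) by apply Rmin_l.
  assert (Hh2 : h <= (x - a) / 2) by apply Rmin_r.
  assert (Hh0 : 0 < h) by (apply Rmin_pos; destruct eps; simpl; lra).
  assert (Hball : ball 0 eps h).
  { change (Rabs (h - 0) < eps). rewrite Rabs_right; destruct eps; simpl in *; lra. }
  specialize (Heps h Hball Hh0).
  change (Rabs ((f (a + h) - f a) / h - l) < (df x - l) / 2) in Heps.
  destruct (MVT_interval f df a (a + h)) as [c [Hc E]]; [lra | | |].
  - apply (cont_on_subinterval f a b _ _ f_cont); lra.
  - intros z Hz. apply f_deriv. lra.
  - assert (Hc' : df x <= df c) by (apply df_nonincreasing; lra).
    replace ((f (a + h) - f a) / h) with (df c) in Heps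
      by (rewrite E; field; lra).
    apply Rabs_def2 in Heps. lra.
Qed.

Lemma concave_chord c : a < c < b ->
  (b - a) * f c >= (b - c) * f a + (c - a) * f b.
Proof.
  intros Hc.
  destruct (MVT_interval f df a c) as [c1 [Hc1 E1]]; [lra | | |].
  { apply (cont_on_subinterval f a b _ _ f_cont); lra. }
  { intros x Hx. apply f_deriv. lra. }
  destruct (MVT_interval f df c b) as [c2 [Hc2 E2]]; [lra | | |].
  { apply (cont_on_subinterval f a b _ _ f_cont); lra. }
  { intros x Hx. apply f_deriv. lra. }
  assert (Hslope : df c2 <= df c1) by (apply df_nonincreasing; lra).
  assert (0 <= (b - c) * (c - a) * (df c1 - df c2)).
  { apply Rmult_le_pos; [apply Rmult_le_pos |]; lra. }
  nra.
Qed.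

End NonincreasingDerivative.

Lemma RInt_ge_nonincreasing (f : R -> R) a b : a <= b ->
  cont_on_interval f a b ->
  (forall p q, a <= p <= q -> q <= b -> f q <= f p) ->
  (b - a) * f b <= RInt f a b.
Proof.
  intros hab hf hdec.
  assert (H : RInt (fun _ => f b) a b <= RInt f a b).
  { apply RInt_le; [exact hab | apply ex_RInt_const | |].
    - apply ex_RInt_cont_on_interval; assumption.
    - intros x Hx. apply hdec; lra. }
  rewrite RInt_const in H. exact H.
Qed.

Section Gamma.

Variables T eta alpha : R.
Hypothesis eta_range : 0 < eta < T.
Hypothesis alpha_range : 0 < alpha < 1 / eta.

Lemma alpha_eta_lt_1 : alpha * eta < 1.
Proof. assert (1 / eta * eta = 1) by (field; lra). nra. Qed.

Lemma gamma_denominator_pos : 0 < T - alpha * eta ^ 2.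
Proof. pose proof alpha_eta_lt_1. nra. Qed.

Lemma gamma_mul_denominator :
  alpha * eta * (T - eta) / (T - alpha * eta ^ 2) * (T - alpha * eta ^ 2)
  = alpha * eta * (T - eta).
Proof. pose proof gamma_denominator_pos. field. lra. Qed.

Lemma gamma_nonneg_lt_1 :
  0 <= alpha * eta * (T - eta) / (T - alpha * eta ^ 2) < 1.
Proof.
  pose proof alpha_eta_lt_1. pose proof gamma_denominator_pos.
  pose proof gamma_mul_denominator.
  assert (0 < alpha * eta * (T - eta)) by (apply Rmult_lt_0_compat; nra).
  split; nra.
Qed.

Lemma endpoint_ge_gamma_start u0 ueta uT I :
  T * ueta >= (T - eta) * u0 + eta * uT ->
  eta * ueta <= I -> uT = alpha * I ->
  uT >= alpha * eta * (T - eta) / (T - alpha * eta ^ 2) * u0.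
Proof.
  intros hchord hint hbd.
  pose proof gamma_denominator_pos as hK.
  assert (uT >= alpha * eta * ueta) by nra.
  assert (T * uT >= T * (alpha * eta * ueta)).
  { apply Rle_ge, Rmult_le_compat_l; lra. }
  assert (alpha * eta * (T * ueta) >= alpha * eta * ((T - eta) * u0 + eta * uT)).
  { apply Rle_ge, Rmult_le_compat_l; nra. }
  assert (hkey : uT * (T - alpha * eta ^ 2) >= alpha * eta * (T - eta) * u0) by nra.
  rewrite <- gamma_mul_denominator in hkey.
  set (gamma := alpha * eta * (T - eta) / (T - alpha * eta ^ 2)) in *.
  nra.
Qed.

End Gamma.

Theorem lemma2p4 (T eta alpha : R) (y u du : R -> R)
  (hT : 0 < T) (heta : 0 < eta < T) (halpha : 0 < alpha < 1 / eta)
  (hy_cont : cont_on_interval y 0 T)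
  (hy_nonneg : forall t, 0 <= t <= T -> 0 <= y t)
  (hu_cont : cont_on_interval u 0 T)
  (hu_d1 : forall t, 0 < t < T -> is_derive u t (du t))
  (hu_d2 : forall t, 0 < t < T -> is_derive du t (- y t))
  (hu_left : right_deriv u 0 0)
  (hu_right : u T = alpha * RInt u 0 eta) :
  let gamma := alpha * eta * (T - eta) / (T - alpha * eta ^ 2) in
  forall t s, 0 <= t <= T -> 0 <= s <= T -> u t >= gamma * Rabs (u s).
Proof.
  intros gamma t s ht hs.
  assert (hdu_dec : forall p q, 0 < p <= q -> q < T -> du q <= du p).
  { intros p q Hp Hq.
    apply (nonincreasing_of_deriv_nonpos du (fun x => - y x) p q); try lra.
    - apply cont_on_interval_ex_derive. intros x Hx. exists (- y x). apply hu_d2. lra.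
    - intros x Hx. apply hu_d2. lra.
    - intros x Hx. assert (0 <= y x) by (apply hy_nonneg; lra). lra. }
  assert (hu_dec : forall p q, 0 <= p <= q -> q <= T -> u q <= u p).
  { apply (nonincreasing_of_deriv_nonpos u du 0 T hu_cont hu_d1).
    exact (deriv_le_right_deriv u du 0 T hu_cont hu_d1 hdu_dec 0 hu_left). }
  assert (hchord := concave_chord u du 0 T hu_cont hu_d1 hdu_dec eta heta).
  assert (hint : (eta - 0) * u eta <= RInt u 0 eta).
  { apply RInt_ge_nonincreasing; [lra | apply (cont_on_subinterval u 0 T _ _ hu_cont); lra |].
    intros p q Hp Hq. apply hu_dec; lra. }
  assert (hmin : u T >= gamma * u 0).
  { apply (endpoint_ge_gamma_start T eta alpha heta halpha _ (u eta) _ (RInt u 0 eta));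
      [lra | lra | exact hu_right]. }
  destruct (gamma_nonneg_lt_1 T eta alpha heta halpha) as [hg0 hg1].
  fold gamma in hg0, hg1.
  assert (hT0 : u T <= u 0) by (apply hu_dec; lra).
  assert (hu0 : 0 <= u 0) by nra.
  assert (hsT : u T <= u s) by (apply hu_dec; lra).
  assert (hs0 : u s <= u 0) by (apply hu_dec; lra).
  assert (htT : u T <= u t) by (apply hu_dec; lra).
  rewrite Rabs_right by nra.
  nra.
Qed.
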